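(* (i) With respect to each of the classes $\mathcal{M}^{prob}$, $\mathcal{M}^{bel}$ and $\mathcal{M}^{poss}$, the languages $\mathcal{L}^E$ and $\mathcal{L}^{QU}$ are equally expressive: every formula of either language is equivalent (true in exactly the same structures of the class) to some formula of the other. (ii) With respect to $\mathcal{M}^{lp}$, $\mathcal{L}^E$ is strictly more expressive than $\mathcal{L}^{QU}$: every formula of $\mathcal{L}^{QU}$ is equivalent over $\mathcal{M}^{lp}$ to a formula of $\mathcal{L}^E$, but some formula of $\mathcal{L}^E$ (e.g. $e(p+q)>1/2$, suitably written with integer coefficients) is not equivalent over $\mathcal{M}^{lp}$ to any formula of $\mathcal{L}^{QU}$.
   Context: Fix a set $\Phi_0$ of primitive propositions. Propositional formulas are built from $\Phi_0$ by $\neg,\wedge$ (other connectives abbreviations); $\mathit{true}$ is a tautology and $\mathit{false}=\neg\mathit{true}$. A propositional gamble is an expression $b_1\phi_1+\cdots+b_n\phi_n$ ($b_i$ integers, $\phi_i$ propositional formulas); sums and integer multiples of propositional gambles are formed termwise and $\phi$ is identified with $1\phi$. $\mathcal{L}^E$: Boolean combinations of expectation inequalities $a_1e(\gamma_1)+\cdots+a_ke(\gamma_k)\ge b$ (integers $a_i,b$, propositional gambles $\gamma_i$). $\mathcal{L}^{QU}$: Boolean combinations of likelihood inequalities $a_1\ell(\phi_1)+\cdots+a_k\ell(\phi_k)\ge b$ (integers $a_i,b$, propositional formulas $\phi_i$). Abbreviations: $t\le b$ is $-t\ge -b$, $t>b$ is $\neg(t\le b)$, $t<b$ is $-t>-b$,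 $t=b$ is $t\ge b\wedge t\le b$. Structures: a probability structure $M=(W,\mathcal F,\mu,\pi)$ ($W$ nonempty set, $\mathcal F$ an algebra on $W$, $\mu$ a probability measure on $\mathcal F$, $\pi$ assigns each world a truth assignment to $\Phi_0$ with each $\{w:\pi(w)(p)=\text{true}\}\in\mathcal F$); a lower probability structure $(W,\mathcal F,\mathcal P,\pi)$ likewise with a set $\mathcal P$ of probability measures on $\mathcal F$; a belief structure $(W,\mathrm{Bel},\pi)$ with a belief function on $W$; a possibility structure $(W,\mathrm{Poss},\pi)$ with a possibility measure on $W$. $\mathcal M^{prob},\mathcal M^{lp},\mathcal M^{bel},\mathcal M^{poss}$ denote these classes. $[\![\phi]\!]_M$ is the set of worlds satisfying $\phi$; $[\![b_1\phi_1+\cdots+b_n\phi_n]\!]_M=\sum_ib_iX_{[\![\phi_i]\!]_M}$ ($X_U$ the indicator of $U$). For a finite-range gamble $X$ with values $x_1<\cdots<x_n$ and set function $\nu$, $C_\nu(X)=x_1+\sum_{i<n}(x_{i+1}-x_i)\nu(X>x_i)$. Semantics: $M\models\sum a_ie(\gamma_i)\ge b$ iff $\sum a_iE(\,[\![\gamma_i]\!]_M)\ge b$, where $E$ is $E_\mu$ (ordinary expectation), $\underline E_{\mathcal P}(X)=\inf_{\mu\in\mathcal P}E_\mu(X)$, $C_{\mathrm{Bel}}$, or $C_{\mathrm{Poss}}$ respectively; $M\models\sum a_i\ell(\phi_i)\ge b$ iff $\sum a_i\nu([\![\phi_i]\!]_M)\ge b$ where $\nu$ is $\mu$, $\mathcal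 P_*(U)=\inf_{\mu\in\mathcal P}\mu(U)$, $\mathrm{Bel}$, or $\mathrm{Poss}$ respectively. Boolean connectives are interpreted classically. Belief functions: $\mathrm{Bel}:2^W\to[0,1]$, $\mathrm{Bel}(\emptyset)=0$, $\mathrm{Bel}(W)=1$, $\mathrm{Bel}(\bigcup_{i=1}^nU_i)\ge\sum_{\emptyset\ne I\subseteq\{1..n\}}(-1)^{|I|+1}\mathrm{Bel}(\bigcap_{j\in I}U_j)$. Possibility measures: $\mathrm{Poss}(\emptyset)=0$, $\mathrm{Poss}(W)=1$, $\mathrm{Poss}(U\cup V)=\max(\mathrm{Poss}(U),\mathrm{Poss}(V))$. *)

From Stdlib Require Import Reals List ZArith Sorting.Sorted ClassicalEpsilon.
Import ListNotations.
Set Implicit Arguments.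
Open Scope R_scope.

Section Syntax.
Variable P : Type.

Inductive form : Type :=
| Prim : P -> form
| Neg : form -> form
| Conj : form -> form -> form.

(* propositional gamble b1 phi1 + ... + bn phin *)
Definition gamble : Type := list (Z * form).

(* L^E : Boolean combinations of  a1 e(g1) + ... + ak e(gk) >= b *)
Inductive eform : Type :=
| EGe : list (Z * gamble) -> Z -> eform
| ENot : eform -> eform
| EAnd : eform -> eform -> eform.

(* L^QU : Boolean combinations of  a1 l(phi1) + ... + ak l(phik) >= b *)
Inductive qform : Type :=
| QGe : list (Z * form) -> Z -> qform
| QNot : qform -> qform
| QAnd : qform -> qform -> qform.
End Syntax.

Arguments Prim {P}. Arguments Neg {P}. Arguments Conj {P}.
Arguments EGe {P}. Arguments ENot {P}. Arguments EAnd {P}.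
Arguments QGe {P}. Arguments QNot {P}. Arguments QAnd {P}.

Definition Rsum (l : list R) : R := fold_right Rplus 0 l.

Fixpoint holds {P W : Type} (pi : W -> P -> bool) (w : W) (f : form P) : bool :=
  match f with
  | Prim p => pi w p
  | Neg g => negb (holds pi w g)
  | Conj g h => holds pi w g && holds pi w h
  end.

Definition ext {P W : Type} (pi : W -> P -> bool) (f : form P) : W -> Prop :=
  fun w => holds pi w f = true.

Definition indicator {P W : Type} (pi : W -> P -> bool) (f : form P) (w : W) : R :=
  if holds pi w f then 1 else 0.

Definition gamble_fun {P W : Type} (pi : W -> P -> bool) (g : gamble P) : W -> R :=
  fun w => Rsum (map (fun bf => IZR (fst bf) * indicator pi (snd bf) w) g).

Fixpoint satE {P : Type} (ev : gamble P -> R) (f : eform P) : Prop :=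
  match f with
  | EGe ts b => Rsum (map (fun ag => IZR (fst ag) * ev (snd ag)) ts) >= IZR b
  | ENot g => ~ satE ev g
  | EAnd g h => satE ev g /\ satE ev h
  end.

Fixpoint satQ {P : Type} (lik : form P -> R) (f : qform P) : Prop :=
  match f with
  | QGe ts b => Rsum (map (fun af => IZR (fst af) * lik (snd af)) ts) >= IZR b
  | QNot g => ~ satQ lik g
  | QAnd g h => satQ lik g /\ satQ lik h
  end.

Definition is_range_list {W : Type} (X : W -> R) (l : list R) : Prop :=
  StronglySorted Rlt l /\ (forall x, In x l <-> exists w, X w = x).

(* the increasing list of values of X (exists and is unique when X has finite range) *)
Definition range_list {W : Type} (X : W -> R) : list R :=
  epsilon (inhabits nil) (is_range_list X).

Definition expect {W : Type} (mu : (W -> Prop) -> R) (X : W -> R) : R :=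
  Rsum (map (fun x => x * mu (fun w => X w = x)) (range_list X)).

Fixpoint csum {W : Type} (nu : (W -> Prop) -> R) (X : W -> R) (l : list R) : R :=
  match l with
  | x :: ((y :: _) as t) => (y - x) * nu (fun w => X w > x) + csum nu X t
  | _ => 0
  end.

Definition choquet {W : Type} (nu : (W -> Prop) -> R) (X : W -> R) : R :=
  match range_list X with
  | nil => 0
  | x1 :: _ => x1 + csum nu X (range_list X)
  end.

(* infimum of a (nonempty, bounded below) set of reals *)
Definition inf_R (S : R -> Prop) : R :=
  epsilon (inhabits 0) (fun r => (forall x, S x -> r <= x) /\
                                 (forall r', (forall x, S x -> r' <= x) -> r' <= r)).

Definition setT {W : Type} : W -> Prop := fun _ => True.
Definition set0 {W : Type} : W -> Prop := fun _ => False.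
Definition setU {W : Type} (U V : W -> Prop) : W -> Prop := fun w => U w \/ V w.
Definition setC {W : Type} (U : W -> Prop) : W -> Prop := fun w => ~ U w.

Definition is_algebra {W : Type} (F : (W -> Prop) -> Prop) : Prop :=
  F setT /\ (forall U, F U -> F (setC U)) /\ (forall U V, F U -> F V -> F (setU U V)).

Definition is_prob_measure {W : Type} (F : (W -> Prop) -> Prop) (mu : (W -> Prop) -> R) : Prop :=
  mu setT = 1 /\ (forall U, F U -> 0 <= mu U) /\
  (forall U V, F U -> F V -> (forall w, U w -> V w -> False) -> mu (setU U V) = mu U + mu V).

Definition pi_measurable {P W : Type} (F : (W -> Prop) -> Prop) (pi : W -> P -> bool) : Prop :=
  forall p : P, F (fun w => pi w p = true).

Record prob_structure (P : Type) := {
  pr_W : Type;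
  pr_W_nonempty : inhabited pr_W;
  pr_F : (pr_W -> Prop) -> Prop;
  pr_F_algebra : is_algebra pr_F;
  pr_mu : (pr_W -> Prop) -> R;
  pr_mu_prob : is_prob_measure pr_F pr_mu;
  pr_pi : pr_W -> P -> bool;
  pr_pi_meas : pi_measurable pr_F pr_pi }.

Record lp_structure (P : Type) := {
  lp_W : Type;
  lp_W_nonempty : inhabited lp_W;
  lp_F : (lp_W -> Prop) -> Prop;
  lp_F_algebra : is_algebra lp_F;
  lp_Pset : ((lp_W -> Prop) -> R) -> Prop;
  lp_Pset_nonempty : exists mu, lp_Pset mu;
  lp_Pset_prob : forall mu, lp_Pset mu -> is_prob_measure lp_F mu;
  lp_pi : lp_W -> P -> bool;
  lp_pi_meas : pi_measurable lp_F lp_pi }.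

Fixpoint subsets (l : list nat) : list (list nat) :=
  match l with
  | nil => [nil]
  | x :: t => map (cons x) (subsets t) ++ subsets t
  end.

Definition is_belief_function {W : Type} (Bel : (W -> Prop) -> R) : Prop :=
  (forall U, 0 <= Bel U <= 1) /\ Bel set0 = 0 /\ Bel setT = 1 /\
  (forall (n : nat) (U : nat -> W -> Prop), (1 <= n)%nat ->
     Bel (fun w => exists i, (i < n)%nat /\ U i w) >=
     Rsum (map (fun I => match I with
                         | nil => 0
                         | _ => (-1) ^ (length I + 1) * Bel (fun w => forall j, In j I -> U j w)
                         end) (subsets (seq 0 n)))).

Record bel_structure (P : Type) := {
  bl_W : Type;
  bl_W_nonempty : inhabited bl_W;
  bl_Bel : (bl_W -> Prop) -> R;
  bl_Bel_belief : is_belief_function bl_Bel;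
  bl_pi : bl_W -> P -> bool }.

Definition is_possibility_measure {W : Type} (Poss : (W -> Prop) -> R) : Prop :=
  (forall U, 0 <= Poss U <= 1) /\ Poss set0 = 0 /\ Poss setT = 1 /\
  (forall U V, Poss (setU U V) = Rmax (Poss U) (Poss V)).

Record poss_structure (P : Type) := {
  ps_W : Type;
  ps_W_nonempty : inhabited ps_W;
  ps_Poss : (ps_W -> Prop) -> R;
  ps_Poss_poss : is_possibility_measure ps_Poss;
  ps_pi : ps_W -> P -> bool }.

Definition satE_prob {P} (M : prob_structure P) (f : eform P) : Prop :=
  satE (fun g => expect (pr_mu M) (gamble_fun (pr_pi M) g)) f.
Definition satQ_prob {P} (M : prob_structure P) (f : qform P) : Prop :=
  satQ (fun phi => pr_mu M (ext (pr_pi M) phi)) f.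

Definition lower_expect {P} (M : lp_structure P) (X : lp_W M -> R) : R :=
  inf_R (fun x => exists mu, lp_Pset M mu /\ x = expect mu X).
Definition lower_prob {P} (M : lp_structure P) (U : lp_W M -> Prop) : R :=
  inf_R (fun x => exists mu, lp_Pset M mu /\ x = mu U).

Definition satE_lp {P} (M : lp_structure P) (f : eform P) : Prop :=
  satE (fun g => lower_expect M (gamble_fun (lp_pi M) g)) f.
Definition satQ_lp {P} (M : lp_structure P) (f : qform P) : Prop :=
  satQ (fun phi => lower_prob M (ext (lp_pi M) phi)) f.

Definition satE_bel {P} (M : bel_structure P) (f : eform P) : Prop :=
  satE (fun g => choquet (bl_Bel M) (gamble_fun (bl_pi M) g)) f.
Definition satQ_bel {P} (M : bel_structure P) (f : qform P) : Prop :=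
  satQ (fun phi => bl_Bel M (ext (bl_pi M) phi)) f.

Definition satE_poss {P} (M : poss_structure P) (f : eform P) : Prop :=
  satE (fun g => choquet (ps_Poss M) (gamble_fun (ps_pi M) g)) f.
Definition satQ_poss {P} (M : poss_structure P) (f : qform P) : Prop :=
  satQ (fun phi => ps_Poss M (ext (ps_pi M) phi)) f.

Definition QU_in_E {P C : Type} (sE : C -> eform P -> Prop) (sQ : C -> qform P -> Prop) : Prop :=
  forall g : qform P, exists f : eform P, forall M : C, sE M f <-> sQ M g.
Definition E_in_QU {P C : Type} (sE : C -> eform P -> Prop) (sQ : C -> qform P -> Prop) : Prop :=
  forall f : eform P, exists g : qform P, forall M : C, sE M f <-> sQ M g.

Definition equally_expressive {P C : Type} (sE : C -> eform P -> Prop) (sQ : C -> qform P -> Prop) : Prop :=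
  QU_in_E sE sQ /\ E_in_QU sE sQ.

(* Every gamble [g] takes integer values between [gamble_lo g] and [gamble_hi g], and
   each event "the value of [g] satisfies Q" is the extension of a propositional formula.
   Along this integer grid the Choquet integral of any set function with [nu set0 = 0] and
   [nu setT = 1] telescopes to [gamble_lo g + sum_k nu (g > gamble_lo g + k)], and for a
   probability measure summation by parts shows that expectation is the Choquet integral.
   So [e(g)] becomes a linear combination of likelihoods of formulas, while [l(phi)] is
   [e(1 phi)].  For sets of measures the first step fails: [{d_FT, (d_TT + d_FF)/2}] and
   the same set enlarged by [(d_FT + d_FF)/2] (worlds = truth values of [p] and [q]) have the
   same lower probability on every event but lower expectations [1] and [1/2] of [p + q],
   so [e(p + q) >= 1] has no equivalent in L^QU. *)

From Stdlib Require Import Reals List ZArith.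
From Stdlib Require Import Lra Lia Classical ClassicalEpsilon FunctionalExtensionality
  PropExtensionality Sorting.Sorted.
Import ListNotations.
Open Scope R_scope.

Lemma pred_ext {W : Type} (U V : W -> Prop) : (forall w, U w <-> V w) -> U = V.
Proof.
  intros H; apply functional_extensionality; intro w; apply propositional_extensionality; auto.
Qed.

Lemma Rsum_app l1 l2 : Rsum (l1 ++ l2) = Rsum l1 + Rsum l2.
Proof. unfold Rsum; induction l1 as [|x l1 IH]; cbn; [ring|]. rewrite IH; ring. Qed.

Lemma Rsum_map_scal {A : Type} (c : R) (f : A -> R) l :
  Rsum (map (fun x => c * f x) l) = c * Rsum (map f l).
Proof. unfold Rsum; induction l as [|x l IH]; cbn; [ring|]. rewrite IH; ring. Qed.

Fixpoint gamble_val {P W : Type} (pi : W -> P -> bool) (g : gamble P) (w : W) : Z :=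
  match g with
  | nil => 0%Z
  | (b, f) :: g' => ((if holds pi w f then b else 0) + gamble_val pi g' w)%Z
  end.

Lemma gamble_fun_val {P W : Type} (pi : W -> P -> bool) g w :
  gamble_fun pi g w = IZR (gamble_val pi g w).
Proof.
  induction g as [|[b f] g IH]; [reflexivity|].
  unfold gamble_fun, Rsum in *; cbn in *. rewrite IH.
  unfold indicator. destruct (holds pi w f); rewrite plus_IZR; ring.
Qed.

Fixpoint gamble_lo {P : Type} (g : gamble P) : Z :=
  match g with nil => 0%Z | (b, _) :: g' => (Z.min b 0 + gamble_lo g')%Z end.
Fixpoint gamble_hi {P : Type} (g : gamble P) : Z :=
  match g with nil => 0%Z | (b, _) :: g' => (Z.max b 0 + gamble_hi g')%Z end.

Lemma gamble_val_bounds {P W : Type} (pi : W -> P -> bool) g w :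
  (gamble_lo g <= gamble_val pi g w <= gamble_hi g)%Z.
Proof. induction g as [|[b f] g IH]; cbn; [lia|]. destruct (holds pi w f); lia. Qed.

(** * Events determined by the value of a gamble are propositional *)

Definition form_false {P : Type} (f0 : form P) : form P := Conj f0 (Neg f0).
Definition form_or {P : Type} (a b : form P) : form P := Neg (Conj (Neg a) (Neg b)).

(* The language has no propositional constants, so the seed [f0] is used to write
   [true] and [false]. *)
Fixpoint val_form {P : Type} (f0 : form P) (g : gamble P) (Q : Z -> bool) : form P :=
  match g with
  | nil => if Q 0%Z then Neg (form_false f0) else form_false f0
  | (b, f) :: g' =>
      form_or (Conj f (val_form f0 g' (fun z => Q (b + z)%Z))) (Conj (Neg f) (val_form f0 g' Q))
  end.

Lemma holds_val_form {P W : Type} (pi : W -> P -> bool) f0 g Q w :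
  holds pi w (val_form f0 g Q) = Q (gamble_val pi g w).
Proof.
  revert Q; induction g as [|[b f] g IH]; intro Q; cbn.
  - destruct (Q 0%Z); cbn; destruct (holds pi w f0); reflexivity.
  - rewrite !IH. destruct (holds pi w f); cbn; try rewrite Z.add_0_r;
      repeat match goal with |- context [Q ?z] => destruct (Q z) end; reflexivity.
Qed.

(* The events [g > gamble_lo g + k] for [k < gamble_hi g - gamble_lo g]. *)
Definition level_forms {P : Type} (g : gamble P) : list (form P) :=
  match g with
  | nil => nil
  | (_, f0) :: _ =>
      map (fun k => val_form f0 g (fun z => Z.ltb (gamble_lo g + Z.of_nat k) z))
          (seq 0 (Z.to_nat (gamble_hi g - gamble_lo g)))
  end.

Section Measurability.
Context {P W : Type} (F : (W -> Prop) -> Prop) (pi : W -> P -> bool).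
Context (HF : is_algebra F) (Hpi : pi_measurable F pi).

Lemma algebra_ext U V : F U -> (forall w, U w <-> V w) -> F V.
Proof. intros H E; rewrite <- (pred_ext U V E); auto. Qed.

Lemma algebra_full U : (forall w, U w) -> F U.
Proof. intros H; apply (algebra_ext setT); [apply HF|]. firstorder. Qed.

Lemma algebra_empty U : (forall w, ~ U w) -> F U.
Proof.
  intros H; apply (algebra_ext (setC setT)); [apply HF, HF|]. unfold setC, setT; firstorder.
Qed.

Lemma algebra_inter U V : F U -> F V -> F (fun w => U w /\ V w).
Proof.
  intros HU HV. destruct HF as [_ [HC HUn]].
  apply (algebra_ext (setC (setU (setC U) (setC V)))); [auto|].
  intro w; unfold setC, setU; tauto.
Qed.

Lemma algebra_form f : F (ext pi f).
Proof.
  induction f as [p|f IH|f IH g IH'].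
  - apply Hpi.
  - apply (algebra_ext (setC (ext pi f))); [apply HF; auto|].
    intro w; unfold setC, ext; cbn; destruct (holds pi w f); cbn; intuition congruence.
  - apply (algebra_ext (fun w => ext pi f w /\ ext pi g w)); [apply algebra_inter; auto|].
    intro w; unfold ext; cbn; destruct (holds pi w f), (holds pi w g); cbn; intuition congruence.
Qed.

Lemma algebra_val_event g (Q : Z -> bool) : F (fun w => Q (gamble_val pi g w) = true).
Proof.
  destruct g as [|[b f0] g'].
  - cbn; destruct (Q 0%Z); [apply algebra_full | apply algebra_empty]; intros; congruence.
  - apply (algebra_ext (ext pi (val_form f0 ((b, f0) :: g') Q))); [apply algebra_form|].
    intro w; unfold ext; rewrite holds_val_form; reflexivity.
Qed.
End Measurability.

Lemma strongly_sorted_eq (l1 l2 : list R) : StronglySorted Rlt l1 -> StronglySorted Rlt l2 ->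
  (forall x, In x l1 <-> In x l2) -> l1 = l2.
Proof.
  revert l2; induction l1 as [|a t1 IH]; intros [|b t2] H1 H2 E.
  - reflexivity.
  - exfalso; apply (proj2 (E b)); cbn; auto.
  - exfalso; apply (proj1 (E a)); cbn; auto.
  - apply StronglySorted_inv in H1 as [H1 F1]. apply StronglySorted_inv in H2 as [H2 F2].
    rewrite Forall_forall in F1, F2.
    assert (a = b) as <-.
    { assert (Ha : In a (b :: t2)) by (apply E; cbn; auto).
      assert (Hb : In b (a :: t1)) by (apply E; cbn; auto).
      destruct Ha as [Ha|Ha]; auto. destruct Hb as [Hb|Hb]; auto.
      apply F2 in Ha; apply F1 in Hb; lra. }
    f_equal. apply IH; auto. intro x; split; intro Hx.
    + assert (In x (a :: t2)) as [->|?] by (apply E; cbn; auto); auto. apply F1 in Hx; lra.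
    + assert (In x (a :: t1)) as [->|?] by (apply E; cbn; auto); auto. apply F2 in Hx; lra.
Qed.

Lemma strongly_sorted_filter (f : R -> bool) l :
  StronglySorted Rlt l -> StronglySorted Rlt (filter f l).
Proof.
  induction l as [|a t IH]; intro H; cbn; [constructor|].
  apply StronglySorted_inv in H as [H Fa].
  destruct (f a); auto. constructor; auto.
  rewrite Forall_forall in *. intros x Hx. apply filter_In in Hx. apply Fa, Hx.
Qed.

Lemma strongly_sorted_map_seq (h : nat -> R) (Hh : forall i j, (i < j)%nat -> h i < h j) n :
  forall s, StronglySorted Rlt (map h (seq s n)).
Proof.
  induction n as [|n IH]; intro s; cbn; constructor; auto.
  rewrite Forall_forall; intros x Hx. apply in_map_iff in Hx as [k [<- Hk]].
  apply in_seq in Hk. apply Hh; lia.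
Qed.

Lemma range_list_eq {W : Type} (X : W -> R) l : is_range_list X l -> range_list X = l.
Proof.
  intro H. unfold range_list.
  pose proof (epsilon_spec (inhabits nil) (is_range_list X) (ex_intro _ l H)) as H2.
  destruct H as [S1 M1]; destruct H2 as [S2 M2].
  apply strongly_sorted_eq; auto. intro x; rewrite M1, M2; tauto.
Qed.

(** * Choquet integrals of gambles *)

Definition normalized {W : Type} (nu : (W -> Prop) -> R) : Prop := nu set0 = 0 /\ nu setT = 1.

Section Attained.
Context {W : Type} (X : W -> R).

Definition attained (x : R) : Prop := exists w, X w = x.
Definition attainedb (x : R) : bool :=
  if excluded_middle_informative (attained x) then true else false.
Definition filter_attained (L : list R) : list R := filter attainedb L.

Lemma filter_attained_cons_in x t :
  attained x -> filter_attained (x :: t) = x :: filter_attained t.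
Proof.
  intro H; unfold filter_attained; cbn; unfold attainedb at 1.
  destruct (excluded_middle_informative _); tauto.
Qed.

Lemma filter_attained_cons_out x t :
  ~ attained x -> filter_attained (x :: t) = filter_attained t.
Proof.
  intro H; unfold filter_attained; cbn; unfold attainedb at 1.
  destruct (excluded_middle_informative _); tauto.
Qed.

Lemma filter_attained_range L : StronglySorted Rlt L -> (forall w, In (X w) L) ->
  is_range_list X (filter_attained L).
Proof.
  intros HS HC. split; [apply strongly_sorted_filter; auto|].
  intro x; unfold filter_attained; rewrite filter_In; unfold attainedb.
  destruct (excluded_middle_informative (attained x)) as [Ha|Ha]; split;
    intuition try discriminate.
  destruct Ha as [w <-]; auto.
Qed.
End Attained.

Section ChoquetAlong.
Context {W : Type} (nu : (W -> Prop) -> R) (X : W -> R).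

(* [C_nu(X)] computed along an arbitrary list in place of the range of [X]. *)
Definition choquet_along (L : list R) : R :=
  match L with nil => 0 | x1 :: _ => x1 + csum nu X L end.

Context (Hnu : normalized nu).

Lemma nu_full U : (forall w, U w) -> nu U = 1.
Proof. intro H; rewrite (pred_ext U setT); [apply Hnu|firstorder]. Qed.

Lemma nu_empty U : (forall w, ~ U w) -> nu U = 0.
Proof. intro H; rewrite (pred_ext U set0); [apply Hnu|unfold set0; firstorder]. Qed.

Lemma csum_skip_unattained a b t : ~ attained X b -> StronglySorted Rlt (a :: b :: t) ->
  (forall w, X w <= a \/ In (X w) (b :: t)) ->
  csum nu X (a :: b :: t) = csum nu X (a :: t).
Proof.
  intros Hb HS Hc. destruct t as [|c t].
  - cbn. rewrite (nu_empty (fun w => X w > a)); [ring|].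
    intros w Hw. destruct (Hc w) as [H|[H|[]]]; [lra|]. apply Hb; exists w; auto.
  - apply StronglySorted_inv in HS as [HS Fa]. apply StronglySorted_inv in HS as [HS Fb].
    rewrite Forall_forall in Fa, Fb.
    assert (Hab : a < b) by (apply Fa; cbn; auto).
    cbn. rewrite (pred_ext (fun w => X w > b) (fun w => X w > a)); [ring|].
    intro w; split; intro H; [lra|].
    destruct (Hc w) as [H'|[H'|H']]; [lra| |].
    + exfalso; apply Hb; exists w; auto.
    + apply Fb in H'; lra.
Qed.

Lemma csum_filter_attained rest : forall a, StronglySorted Rlt (a :: rest) ->
  (forall w, X w <= a \/ In (X w) rest) ->
  csum nu X (a :: rest) = csum nu X (a :: filter_attained X rest).
Proof.
  induction rest as [|b t IH]; intros a HS Hc; [reflexivity|].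
  pose proof HS as HS'.
  apply StronglySorted_inv in HS' as [HSb Fa]. rewrite Forall_forall in Fa.
  assert (Hab : a < b) by (apply Fa; cbn; auto).
  destruct (classic (attained X b)) as [Hb|Hb].
  - rewrite filter_attained_cons_in by auto. cbn [csum]. f_equal.
    apply IH; auto. intro w; destruct (Hc w) as [H|[H|H]]; auto; left; lra.
  - rewrite filter_attained_cons_out, csum_skip_unattained by auto.
    apply IH.
    + apply StronglySorted_inv in HSb as [HSt _].
      constructor; auto. rewrite Forall_forall; intros x Hx; apply Fa; cbn; auto.
    + intro w; destruct (Hc w) as [H|[H|H]]; auto. exfalso; apply Hb; exists w; auto.
Qed.

Lemma choquet_along_filter_attained (Hw : inhabited W) L : StronglySorted Rlt L ->
  (forall w, In (X w) L) -> choquet_along L = choquet_along (filter_attained X L).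
Proof.
  induction L as [|l t IH]; intros HS Hc; [reflexivity|].
  destruct (classic (attained X l)) as [Hl|Hl].
  - rewrite filter_attained_cons_in by auto. unfold choquet_along. f_equal.
    apply csum_filter_attained; auto.
    intro w; destruct (Hc w) as [H|H]; auto; left; lra.
  - rewrite filter_attained_cons_out by auto.
    apply StronglySorted_inv in HS as [HS Fl]. rewrite Forall_forall in Fl.
    assert (Hc' : forall w, In (X w) t).
    { intro w; destruct (Hc w) as [H|H]; auto. exfalso; apply Hl; exists w; auto. }
    rewrite <- IH by auto.
    destruct t as [|b t']; [destruct Hw as [w]; destruct (Hc' w)|].
    cbn. rewrite (nu_full (fun w => X w > l)); [ring|].
    intro w. specialize (Hc' w). apply Fl in Hc'; lra.
Qed.

Lemma choquet_eq_along (Hw : inhabited W) L : StronglySorted Rlt L ->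
  (forall w, In (X w) L) -> choquet nu X = choquet_along L.
Proof.
  intros HS Hc. rewrite (choquet_along_filter_attained Hw L HS Hc).
  change (choquet nu X) with (choquet_along (range_list X)).
  rewrite (range_list_eq X (filter_attained X L)); auto. apply filter_attained_range; auto.
Qed.
End ChoquetAlong.

Lemma csum_unit_steps {W : Type} (nu : (W -> Prop) -> R) (X : W -> R) (h : nat -> R)
  (Hh : forall k, h (S k) - h k = 1) n : forall s,
  csum nu X (map h (seq s (S n))) = Rsum (map (fun k => nu (fun w => X w > h k)) (seq s n)).
Proof.
  induction n as [|n IH]; intro s; [reflexivity|].
  change (csum nu X (map h (seq s (S (S n))))) with
    ((h (S s) - h s) * nu (fun w => X w > h s) + csum nu X (map h (seq (S s) (S n)))).
  rewrite IH, Hh. unfold Rsum; cbn. ring.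
Qed.

Section Grid.
Context {P W : Type} (pi : W -> P -> bool) (nu : (W -> Prop) -> R).
Context (Hw : inhabited W) (Hnu : normalized nu).

Definition grid_point (g : gamble P) (k : nat) : R := IZR (gamble_lo g + Z.of_nat k).
Definition grid (g : gamble P) : list R :=
  map (grid_point g) (seq 0 (S (Z.to_nat (gamble_hi g - gamble_lo g)))).

Lemma grid_sorted g : StronglySorted Rlt (grid g).
Proof. apply strongly_sorted_map_seq. intros i j H; unfold grid_point; apply IZR_lt; lia. Qed.

Lemma grid_cover g w : In (gamble_fun pi g w) (grid g).
Proof.
  rewrite gamble_fun_val. unfold grid. apply in_map_iff.
  pose proof (gamble_val_bounds pi g w).
  exists (Z.to_nat (gamble_val pi g w - gamble_lo g)). split.
  - unfold grid_point. f_equal. lia.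
  - apply in_seq. lia.
Qed.

Lemma choquet_gamble g : choquet nu (gamble_fun pi g) =
  IZR (gamble_lo g) + Rsum (map (fun f => nu (ext pi f)) (level_forms g)).
Proof.
  rewrite (choquet_eq_along _ _ Hnu Hw (grid g) (grid_sorted g) (grid_cover g)).
  change (choquet_along nu (gamble_fun pi g) (grid g)) with
    (grid_point g 0 + csum nu (gamble_fun pi g)
       (map (grid_point g) (seq 0 (S (Z.to_nat (gamble_hi g - gamble_lo g)))))).
  unfold grid_point at 1. rewrite Z.add_0_r, csum_unit_steps. f_equal.
  2: { intro k; unfold grid_point. rewrite <- minus_IZR. f_equal. lia. }
  destruct g as [|[b f0] g']; [reflexivity|].
  unfold level_forms. rewrite map_map. f_equal. apply map_ext; intro k.
  f_equal. apply pred_ext. intro w.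
  unfold ext. rewrite holds_val_form, gamble_fun_val. unfold grid_point.
  rewrite Z.ltb_lt. split; intro H; [apply lt_IZR; lra|apply IZR_lt in H; lra].
Qed.

Lemma choquet_indicator f : choquet nu (gamble_fun pi [(1%Z, f)]) = nu (ext pi f).
Proof.
  rewrite choquet_gamble.
  change (0 + (nu (ext pi (val_form f [(1%Z, f)] (fun z => Z.ltb (0 + Z.of_nat 0) z))) + 0)
          = nu (ext pi f)).
  rewrite Rplus_0_l, Rplus_0_r.
  f_equal. apply pred_ext; intro w. unfold ext. rewrite holds_val_form. cbn.
  destruct (holds pi w f); cbn; intuition congruence.
Qed.
End Grid.

Section Expectation.
Context {W : Type} (F : (W -> Prop) -> Prop) (mu : (W -> Prop) -> R).
Context (HF : is_algebra F) (Hmu : is_prob_measure F mu).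

Lemma prob_measure_normalized : normalized mu.
Proof.
  destruct HF as [HT [HC _]]. destruct Hmu as [H1 [_ Hadd]]. split; [|exact H1].
  assert (F0 : F set0).
  { rewrite (pred_ext set0 (setC setT)); [auto|unfold set0, setC, setT; tauto]. }
  pose proof (Hadd set0 set0 F0 F0 (fun _ h _ => h)) as A.
  rewrite (pred_ext (setU set0 set0) set0) in A; [lra|unfold setU; tauto].
Qed.

Context (X : W -> R).
Context (HX : forall x, attained X x -> F (fun w => X w = x) /\ F (fun w => X w > x)).

(* Summation by parts over the values [x < y < ...] of [X] that are at least [x]. *)
Lemma values_sum_by_parts t : forall x, StronglySorted Rlt (x :: t) ->
  Forall (attained X) (x :: t) -> (forall w, X w >= x -> In (X w) (x :: t)) ->
  Rsum (map (fun y => y * mu (fun w => X w = y)) (x :: t)) =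
  x * mu (fun w => X w >= x) + csum mu X (x :: t).
Proof.
  induction t as [|y t IH]; intros x HS Ha Hc.
  - cbn. rewrite (pred_ext (fun w => X w = x) (fun w => X w >= x)); [ring|].
    intro w; split; intro H; [lra|]. destruct (Hc w H) as [H'|[]]; auto.
  - apply StronglySorted_inv in HS as [HS Fx]. rewrite Forall_forall in Fx.
    assert (Hxy : x < y) by (apply Fx; cbn; auto).
    inversion Ha as [|? ? Hax Hat]; subst.
    change (Rsum (map (fun y => y * mu (fun w => X w = y)) (x :: y :: t))) with
      (x * mu (fun w => X w = x) + Rsum (map (fun y => y * mu (fun w => X w = y)) (y :: t))).
    change (csum mu X (x :: y :: t)) with ((y - x) * mu (fun w => X w > x) + csum mu X (y :: t)).
    rewrite IH; auto.
    2: { intros w Hw. destruct (Hc w ltac:(lra)) as [H'|H']; [lra|auto]. }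
    assert (Hgt : mu (fun w => X w > x) = mu (fun w => X w >= y)).
    { f_equal; apply pred_ext; intro w; split; intro H; [|lra].
      destruct (Hc w ltac:(lra)) as [H'|[H'|H']]; [lra|lra|].
      apply StronglySorted_inv in HS as [_ Fy]. rewrite Forall_forall in Fy.
      apply Fy in H'; lra. }
    assert (Hge : mu (fun w => X w >= x) = mu (fun w => X w = x) + mu (fun w => X w > x)).
    { destruct Hmu as [_ [_ Hadd]]. destruct (HX x Hax) as [F1 F2].
      rewrite <- Hadd; auto; [|intros w h1 h2; lra].
      f_equal; apply pred_ext; intro w; unfold setU; lra. }
    rewrite Hge, <- Hgt. ring.
Qed.

Lemma expect_eq_choquet_range (Hw : inhabited W) : is_range_list X (range_list X) ->
  expect mu X = choquet mu X.
Proof.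
  intros [HS HM]. unfold expect, choquet.
  destruct (range_list X) as [|x t] eqn:ER.
  - destruct Hw as [w]. exfalso. apply (proj2 (HM (X w))). eauto.
  - rewrite values_sum_by_parts; auto.
    + rewrite (nu_full _ prob_measure_normalized); [ring|]. intro w.
      assert (Hin : In (X w) (x :: t)) by (apply HM; eauto).
      destruct Hin as [<-|Hin]; [lra|]. apply StronglySorted_inv in HS as [_ Fx].
      rewrite Forall_forall in Fx. apply Fx in Hin; lra.
    + rewrite Forall_forall; intros y Hy. apply HM in Hy. exact Hy.
    + intros w _. apply HM; eauto.
Qed.
End Expectation.

Section ExpectationGamble.
Context {P W : Type} (F : (W -> Prop) -> Prop) (mu : (W -> Prop) -> R) (pi : W -> P -> bool).
Context (HF : is_algebra F) (Hmu : is_prob_measure F mu) (Hpi : pi_measurable F pi).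
Context (Hw : inhabited W).

Lemma expect_eq_choquet g : expect mu (gamble_fun pi g) = choquet mu (gamble_fun pi g).
Proof.
  apply (expect_eq_choquet_range F); auto.
  - intros x [w0 <-]. split.
    + apply (algebra_ext F (fun w => Z.eqb (gamble_val pi g w0) (gamble_val pi g w) = true)).
      { exact (algebra_val_event F pi HF Hpi g (Z.eqb (gamble_val pi g w0))). }
      intro w. rewrite !gamble_fun_val, Z.eqb_eq.
      split; intro H; [rewrite H; auto|apply eq_IZR; auto].
    + apply (algebra_ext F (fun w => Z.ltb (gamble_val pi g w0) (gamble_val pi g w) = true)).
      { exact (algebra_val_event F pi HF Hpi g (Z.ltb (gamble_val pi g w0))). }
      intro w. rewrite !gamble_fun_val, Z.ltb_lt.
      split; intro H; [apply IZR_lt in H; lra|apply lt_IZR; lra].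
  - assert (Hr := filter_attained_range (gamble_fun pi g) (grid g) (grid_sorted g)
                    (grid_cover pi g)).
    rewrite (range_list_eq _ _ Hr). exact Hr.
Qed.

Lemma expect_gamble g : expect mu (gamble_fun pi g) =
  IZR (gamble_lo g) + Rsum (map (fun f => mu (ext pi f)) (level_forms g)).
Proof.
  rewrite expect_eq_choquet. apply choquet_gamble; [exact Hw|].
  exact (prob_measure_normalized F mu HF Hmu).
Qed.

Lemma expect_indicator f : expect mu (gamble_fun pi [(1%Z, f)]) = mu (ext pi f).
Proof.
  rewrite expect_eq_choquet. apply choquet_indicator; [exact Hw|].
  exact (prob_measure_normalized F mu HF Hmu).
Qed.
End ExpectationGamble.

(** * Translations between the two languages *)

Definition level_terms {P : Type} (ts : list (Z * gamble P)) : list (Z * form P) :=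
  flat_map (fun ag => map (fun f => (fst ag, f)) (level_forms (snd ag))) ts.

Definition level_const {P : Type} (ts : list (Z * gamble P)) : Z :=
  fold_right (fun ag acc => (fst ag * gamble_lo (snd ag) + acc)%Z) 0%Z ts.

Fixpoint e_to_qu {P : Type} (f : eform P) : qform P :=
  match f with
  | EGe ts b => QGe (level_terms ts) (b - level_const ts)
  | ENot g => QNot (e_to_qu g)
  | EAnd g h => QAnd (e_to_qu g) (e_to_qu h)
  end.

Fixpoint qu_to_e {P : Type} (f : qform P) : eform P :=
  match f with
  | QGe ts b => EGe (map (fun af => (fst af, [(1%Z, snd af)])) ts) b
  | QNot g => ENot (qu_to_e g)
  | QAnd g h => EAnd (qu_to_e g) (qu_to_e h)
  end.

Section Translations.
Context {P : Type} (ev : gamble P -> R) (lik : form P -> R).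

Lemma qu_to_e_correct (Hind : forall f, ev [(1%Z, f)] = lik f) f :
  satE ev (qu_to_e f) <-> satQ lik f.
Proof.
  induction f as [ts b|g IH|g IH h IH']; cbn; [|tauto|tauto].
  rewrite map_map. erewrite map_ext; [reflexivity|]. intro a; cbn. rewrite Hind; reflexivity.
Qed.

Context (Hlev : forall g, ev g = IZR (gamble_lo g) + Rsum (map lik (level_forms g))).

Lemma sum_level_terms ts :
  Rsum (map (fun ag => IZR (fst ag) * ev (snd ag)) ts) =
  IZR (level_const ts) + Rsum (map (fun af => IZR (fst af) * lik (snd af)) (level_terms ts)).
Proof.
  induction ts as [|[a g] ts IH]; [cbn; ring|].
  unfold level_terms; cbn [flat_map]. rewrite map_app, Rsum_app. fold (level_terms ts).
  cbn [map level_const fold_right fst snd]. change (Rsum (?x :: ?l)) with (x + Rsum l).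
  rewrite IH, Hlev, plus_IZR, mult_IZR, map_map. cbn [fst snd].
  rewrite (Rsum_map_scal (IZR a) lik). fold (level_const ts). ring.
Qed.

Lemma e_to_qu_correct f : satE ev f <-> satQ lik (e_to_qu f).
Proof.
  induction f as [ts b|g IH|g IH h IH']; cbn; [|tauto|tauto].
  rewrite sum_level_terms, minus_IZR. split; intro; lra.
Qed.
End Translations.

Lemma equally_expressive_of_levels {P C : Type} (ev : C -> gamble P -> R)
  (lik : C -> form P -> R)
  (Hlev : forall M g, ev M g = IZR (gamble_lo g) + Rsum (map (lik M) (level_forms g)))
  (Hind : forall M f, ev M [(1%Z, f)] = lik M f) :
  equally_expressive (fun M => satE (ev M)) (fun M => satQ (lik M)).
Proof.
  split.
  - intro g; exists (qu_to_e g); intro M. apply qu_to_e_correct, Hind.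
  - intro f; exists (e_to_qu f); intro M. apply e_to_qu_correct, Hlev.
Qed.

Lemma prob_equally_expressive (P : Type) : equally_expressive (@satE_prob P) (@satQ_prob P).
Proof.
  apply (equally_expressive_of_levels
           (fun M g => expect (pr_mu M) (gamble_fun (pr_pi M) g))
           (fun M f => pr_mu M (ext (pr_pi M) f))); intros [W Hw F HF mu Hmu pi Hpi]; cbn.
  - apply (expect_gamble F); auto.
  - apply (expect_indicator F); auto.
Qed.

Lemma belief_normalized {W : Type} (Bel : (W -> Prop) -> R) :
  is_belief_function Bel -> normalized Bel.
Proof. intros (_ & H0 & H1 & _); split; assumption. Qed.

Lemma possibility_normalized {W : Type} (Poss : (W -> Prop) -> R) :
  is_possibility_measure Poss -> normalized Poss.
Proof. intros (_ & H0 & H1 & _); split; assumption. Qed.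

Lemma bel_equally_expressive (P : Type) : equally_expressive (@satE_bel P) (@satQ_bel P).
Proof.
  apply (equally_expressive_of_levels
           (fun M g => choquet (bl_Bel M) (gamble_fun (bl_pi M) g))
           (fun M f => bl_Bel M (ext (bl_pi M) f))); intros [W Hw Bel HBel pi]; cbn.
  - apply choquet_gamble; [exact Hw|apply belief_normalized, HBel].
  - apply choquet_indicator; [exact Hw|apply belief_normalized, HBel].
Qed.

Lemma poss_equally_expressive (P : Type) : equally_expressive (@satE_poss P) (@satQ_poss P).
Proof.
  apply (equally_expressive_of_levels
           (fun M g => choquet (ps_Poss M) (gamble_fun (ps_pi M) g))
           (fun M f => ps_Poss M (ext (ps_pi M) f))); intros [W Hw Poss HPoss pi]; cbn.
  - apply choquet_gamble; [exact Hw|apply possibility_normalized, HPoss].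
  - apply choquet_indicator; [exact Hw|apply possibility_normalized, HPoss].
Qed.

Lemma lp_QU_in_E (P : Type) : QU_in_E (@satE_lp P) (@satQ_lp P).
Proof.
  intro g; exists (qu_to_e g); intros [W Hw F HF Pset Hne Hprob pi Hpi].
  apply qu_to_e_correct; intro f; cbn.
  unfold lower_expect, lower_prob; cbn. f_equal. apply pred_ext; intro x.
  split; intros [mu [Hm ->]]; exists mu; split; auto;
    rewrite (expect_indicator F); auto.
Qed.

(** * Lower probabilities do not determine lower expectations *)

Lemma inf_R_attained (S : R -> Prop) m : S m -> (forall x, S x -> m <= x) -> inf_R S = m.
Proof.
  intros Hm Hlb. unfold inf_R.
  assert (Ex : exists r, (forall x, S x -> r <= x) /\
                         (forall r', (forall x, S x -> r' <= x) -> r' <= r)) by (exists m; auto).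
  destruct (epsilon_spec (inhabits 0) _ Ex) as [H1 H2].
  apply H1 in Hm. apply H2 in Hlb. lra.
Qed.

Definition dirac {W : Type} (w : W) (U : W -> Prop) : R :=
  if excluded_middle_informative (U w) then 1 else 0.

Definition mix_half {W : Type} (mu nu : (W -> Prop) -> R) (U : W -> Prop) : R :=
  / 2 * mu U + / 2 * nu U.

Lemma dirac_prob {W : Type} (F : (W -> Prop) -> Prop) (w : W) : is_prob_measure F (dirac w).
Proof.
  unfold dirac; split; [|split].
  - destruct (excluded_middle_informative _) as [_|n]; [reflexivity|exfalso; apply n; exact I].
  - intros U _; destruct (excluded_middle_informative (U w)); lra.
  - intros U V _ _ D; unfold setU.
    destruct (excluded_middle_informative (U w)), (excluded_middle_informative (V w)),
      (excluded_middle_informative (U w \/ V w)); try lra; try tauto.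
    exfalso; eauto.
Qed.

Lemma mix_half_prob {W : Type} (F : (W -> Prop) -> Prop) mu nu :
  is_prob_measure F mu -> is_prob_measure F nu -> is_prob_measure F (@mix_half W mu nu).
Proof.
  intros (Hmu1 & Hmu0 & Hmua) (Hnu1 & Hnu0 & Hnua). unfold mix_half; split; [|split].
  - rewrite Hmu1, Hnu1; lra.
  - intros U HU; specialize (Hmu0 U HU); specialize (Hnu0 U HU); lra.
  - intros U V HU HV D; rewrite Hmua, Hnua by auto; lra.
Qed.

Lemma dirac_bool {W : Type} (w : W) (b : W -> bool) :
  dirac w (fun v => b v = true) = if b w then 1 else 0.
Proof. unfold dirac; destruct (excluded_middle_informative _), (b w); congruence. Qed.

Section PQCounterexample.
Context {P : Type} (p q : P) (Hpq : p <> q).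

Definition pq_pi (w : bool * bool) (r : P) : bool :=
  if excluded_middle_informative (r = p) then fst w
  else if excluded_middle_informative (r = q) then snd w else false.

Lemma pq_pi_p w : pq_pi w p = fst w.
Proof. unfold pq_pi. destruct (excluded_middle_informative (p = p)); congruence. Qed.

Lemma pq_pi_q w : pq_pi w q = snd w.
Proof.
  unfold pq_pi. destruct (excluded_middle_informative (q = p)); [congruence|].
  destruct (excluded_middle_informative (q = q)); congruence.
Qed.

Definition all_sets : (bool * bool -> Prop) -> Prop := fun _ => True.

Lemma all_sets_algebra : is_algebra all_sets.
Proof. unfold is_algebra, all_sets; auto. Qed.

Lemma pq_pi_measurable : pi_measurable all_sets pq_pi.
Proof. intro r; exact I. Qed.

Definition p_plus_q : gamble P := [(1%Z, Prim p); (1%Z, Prim q)].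

Lemma expect_p_plus_q mu : is_prob_measure all_sets mu ->
  expect mu (gamble_fun pq_pi p_plus_q) =
  mu (fun w => (fst w || snd w)%bool = true) + mu (fun w => (fst w && snd w)%bool = true).
Proof.
  intro Hmu.
  rewrite (expect_gamble all_sets mu pq_pi all_sets_algebra Hmu pq_pi_measurable
             (inhabits (true, true))).
  change (0 + (mu (ext pq_pi (val_form (Prim p) p_plus_q (fun z => Z.ltb (0 + Z.of_nat 0) z)))
             + (mu (ext pq_pi (val_form (Prim p) p_plus_q (fun z => Z.ltb (0 + Z.of_nat 1) z)))
                + 0)) = mu (fun w => (fst w || snd w)%bool = true) + mu (fun w => (fst w && snd w)%bool = true)).
  rewrite Rplus_0_l, Rplus_0_r.
  f_equal; f_equal; apply pred_ext; intros [a b]; unfold ext;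
    rewrite holds_val_form; cbn [gamble_val p_plus_q holds]; rewrite pq_pi_p, pq_pi_q;
    destruct a, b; cbn; tauto.
Qed.

Definition mu_ft : (bool * bool -> Prop) -> R := dirac (false, true).
Definition mu_tt_ff : (bool * bool -> Prop) -> R := mix_half (dirac (true, true)) (dirac (false, false)).
Definition mu_ft_ff : (bool * bool -> Prop) -> R := mix_half (dirac (false, true)) (dirac (false, false)).

Lemma pq_measures_prob m :
  m = mu_ft \/ m = mu_tt_ff \/ m = mu_ft_ff -> is_prob_measure all_sets m.
Proof.
  intros [->|[->| ->]]; repeat apply mix_half_prob; apply dirac_prob.
Qed.

Lemma pq_two_prob m : m = mu_ft \/ m = mu_tt_ff -> is_prob_measure all_sets m.
Proof. intro Hm; apply pq_measures_prob; tauto. Qed.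

Lemma expect_mu_ft : expect mu_ft (gamble_fun pq_pi p_plus_q) = 1.
Proof.
  rewrite expect_p_plus_q by (apply pq_measures_prob; auto).
  unfold mu_ft; rewrite !dirac_bool; cbn; lra.
Qed.

Lemma expect_mu_tt_ff : expect mu_tt_ff (gamble_fun pq_pi p_plus_q) = 1.
Proof.
  rewrite expect_p_plus_q by (apply pq_measures_prob; auto).
  unfold mu_tt_ff, mix_half; rewrite !dirac_bool; cbn; lra.
Qed.

Lemma expect_mu_ft_ff : expect mu_ft_ff (gamble_fun pq_pi p_plus_q) = / 2.
Proof.
  rewrite expect_p_plus_q by (apply pq_measures_prob; auto).
  unfold mu_ft_ff, mix_half; rewrite !dirac_bool; cbn; lra.
Qed.

Lemma mu_ft_ff_ge_min U : Rmin (mu_ft U) (mu_tt_ff U) <= mu_ft_ff U.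
Proof.
  unfold mu_ft, mu_tt_ff, mu_ft_ff, mix_half, dirac, Rmin.
  destruct (excluded_middle_informative (U (false, true))),
    (excluded_middle_informative (U (true, true))),
    (excluded_middle_informative (U (false, false))); destruct (Rle_dec _ _); lra.
Qed.

Definition lp_two : lp_structure P :=
  {| lp_W := bool * bool; lp_W_nonempty := inhabits (true, true);
     lp_F := all_sets; lp_F_algebra := all_sets_algebra;
     lp_Pset := fun m => m = mu_ft \/ m = mu_tt_ff;
     lp_Pset_nonempty := ex_intro _ mu_ft (or_introl eq_refl);
     lp_Pset_prob := pq_two_prob;
     lp_pi := pq_pi; lp_pi_meas := pq_pi_measurable |}.

Definition lp_three : lp_structure P :=
  {| lp_W := bool * bool; lp_W_nonempty := inhabits (true, true);
     lp_F := all_sets; lp_F_algebra := all_sets_algebra;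
     lp_Pset := fun m => m = mu_ft \/ m = mu_tt_ff \/ m = mu_ft_ff;
     lp_Pset_nonempty := ex_intro _ mu_ft (or_introl eq_refl);
     lp_Pset_prob := pq_measures_prob;
     lp_pi := pq_pi; lp_pi_meas := pq_pi_measurable |}.

Lemma lower_expect_lp_two : lower_expect lp_two (gamble_fun pq_pi p_plus_q) = 1.
Proof.
  apply inf_R_attained.
  - exists mu_ft; split; [left; reflexivity|]. cbn. rewrite expect_mu_ft; reflexivity.
  - intros x [m [[->| ->] ->]]; cbn; [rewrite expect_mu_ft|rewrite expect_mu_tt_ff]; lra.
Qed.

Lemma lower_expect_lp_three : lower_expect lp_three (gamble_fun pq_pi p_plus_q) = / 2.
Proof.
  apply inf_R_attained.
  - exists mu_ft_ff; split; [right; right; reflexivity|]. cbn. rewrite expect_mu_ft_ff; reflexivity.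
  - intros x [m [[->|[->| ->]] ->]]; cbn;
      [rewrite expect_mu_ft|rewrite expect_mu_tt_ff|rewrite expect_mu_ft_ff]; lra.
Qed.

(* Adding [mu_ft_ff] does not change the lower envelope, by [mu_ft_ff_ge_min]. *)
Lemma lower_prob_lp_two_three U : lower_prob lp_two U = lower_prob lp_three U.
Proof.
  transitivity (Rmin (mu_ft U) (mu_tt_ff U)); [|symmetry]; apply inf_R_attained.
  - unfold Rmin; destruct (Rle_dec _ _); eexists; split;
      [left|reflexivity|right|reflexivity]; reflexivity.
  - intros x [m [[->| ->] ->]]; [apply Rmin_l|apply Rmin_r].
  - unfold Rmin; destruct (Rle_dec _ _); eexists; split;
      [left|reflexivity|right; left|reflexivity]; reflexivity.
  - intros x [m [[->|[->| ->]] ->]]; [apply Rmin_l|apply Rmin_r|apply mu_ft_ff_ge_min].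
Qed.

Lemma lp_not_E_in_QU : ~ E_in_QU (@satE_lp P) (@satQ_lp P).
Proof.
  intro H. destruct (H (EGe [(1%Z, p_plus_q)] 1%Z)) as [g Hg].
  assert (Hlik : (fun phi => lower_prob lp_two (ext (lp_pi lp_two) phi)) =
                 (fun phi => lower_prob lp_three (ext (lp_pi lp_three) phi))).
  { apply functional_extensionality; intro phi. apply lower_prob_lp_two_three. }
  pose proof (Hg lp_two) as Htwo. pose proof (Hg lp_three) as Hthree.
  unfold satQ_lp, satE_lp in *. rewrite Hlik in Htwo. cbn in Htwo, Hthree.
  rewrite lower_expect_lp_two in Htwo. rewrite lower_expect_lp_three in Hthree.
  assert (Hsat : satQ (fun phi => lower_prob lp_three (ext pq_pi phi)) g) by (apply Htwo; lra).
  apply Hthree in Hsat. lra.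
Qed.
End PQCounterexample.

Theorem theorem4p1 (P : Type) :
  equally_expressive (@satE_prob P) (@satQ_prob P) /\
  equally_expressive (@satE_bel P) (@satQ_bel P) /\
  equally_expressive (@satE_poss P) (@satQ_poss P) /\
  QU_in_E (@satE_lp P) (@satQ_lp P) /\
  ((exists p q : P, p <> q) ->
     ~ E_in_QU (@satE_lp P) (@satQ_lp P)).
Proof.
  split; [apply prob_equally_expressive|].
  split; [apply bel_equally_expressive|].
  split; [apply poss_equally_expressive|].
  split; [apply lp_QU_in_E|].
  intros (p & q & Hpq). exact (lp_not_E_in_QU p q Hpq).
Qed.
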